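(* Let $X\in\mathbf{R}$, $Y>0$, and let $f\colon(X,X+Y]\to\mathbf{R}$ be a real function. Let $d,H_1,\dots,H_d$ be natural numbers with $H_1+\cdots+H_d\le Y$. Then \[ \Bigl|\frac{1}{Y}\sum_{X<n\le X+Y}e(f(n))\Bigr|\le B\max\bigl(H_1^{-1/2},H_2^{-1/4},\dots,H_d^{-1/2^d},\,B^{-1/2^d}T_d^{1/2^d}\bigr), \] where $B=2+2\sqrt2$ and \[ T_d=\frac{1}{YH_1\cdots H_d}\sum_{\mathbf a}\Bigl|\sum_{n\in I(\mathbf a)}e(f_{\mathbf a}(n))\Bigr|, \] the outer sum running over all integer vectors $\mathbf a=(a_1,\dots,a_d)$ with $1\le a_r\le H_r-1$ for each $r$.
   Context: $e(x)=e^{2\pi i x}$; sums over $n$ are over integers. For real $a_1,\dots,a_h$ define inductively $f_{(a_1)}(x)=f(x+a_1)-f(x)$ and $f_{(a_1,\dots,a_h)}(x)=f_{(a_1,\dots,a_{h-1})}(x+a_h)-f_{(a_1,\dots,a_{h-1})}(x)$. For positive $a_j$, $f_{\mathbf a}$ is defined exactly on $I(\mathbf a)=(X,X+Y-\sum_j a_j]$ (possibly empty), and by convention $e(f_{\mathbf a}(x))=0$ when $f_{\mathbf a}(x)$ is undefined. *)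

From Stdlib Require Import Reals ZArith List.
From Coquelicot Require Import Coquelicot.
Open Scope R_scope.

Definition e (x : R) : C := (cos (2 * PI * x), sin (2 * PI * x)).

(* Sum of g n over the integers n with lo <= n <= hi (empty if hi < lo). *)
Definition sumZ (lo hi : Z) (g : Z -> C) : C :=
  fold_right Cplus 0%C
    (map (fun k : nat => g (lo + Z.of_nat k)%Z) (seq 0 (Z.to_nat (hi - lo + 1)))).

(* Sum of g n over the integers n with A < n <= B'.
   [up A] is the least integer > A, [up B' - 1] the greatest integer <= B'. *)
Definition sum_int_in (A B' : R) (g : Z -> C) : C :=
  sumZ (up A) (up B' - 1)%Z g.

(* Iterated difference: for l = [a_1; ...; a_h],
   fdiff f l = f_(a_1,...,a_h), with f_(a_1)(x) = f(x+a_1) - f(x) and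
   f_(a_1..a_h)(x) = f_(a_1..a_{h-1})(x+a_h) - f_(a_1..a_{h-1})(x). *)
Definition fdiff (f : R -> R) (l : list R) : R -> R :=
  fold_left (fun g a => fun x => g (x + a) - g x) l f.

(* All integer vectors [a_1; ...; a_k] with 1 <= a_r <= H_r - 1, where
   H_r is H (r-1) (indices shifted to start at 0). *)
Fixpoint allvecs (H : nat -> nat) (k : nat) : list (list nat) :=
  match k with
  | O => nil :: nil
  | S k' => flat_map (fun v => map (fun a => v ++ a :: nil) (seq 1 (H k' - 1)))
                     (allvecs H k')
  end.

Definition sumR (l : list R) : R := fold_right Rplus 0 l.
Definition prodR (l : list R) : R := fold_right Rmult 1 l.

Definition Td (f : R -> R) (X Y : R) (d : nat) (H : nat -> nat) : R :=
  / (Y * prodR (map (fun r => INR (H r)) (seq 0 d))) *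
  sumR (map (fun v : list nat =>
          let a := map INR v in
          Cmod (sum_int_in X (X + Y - sumR a)
                  (fun n => e (fdiff f a (IZR n)))))
        (allvecs H d)).

(* Real power x^y for x >= 0, with the convention 0^y = 0 (y > 0 here). *)
Definition rpow (x y : R) : R :=
  if Req_EM_T x 0 then 0 else Rpower x y.

Definition Bconst : R := 2 + 2 * sqrt 2.

(* Van der Corput's inequality, iterated.  Let S = sum_(k<N) u_k with |u_k| = 1 and let
   H >= 1.  Summing the H+N-1 windows of H consecutive terms of u (padded by zeros)
   counts every u_k exactly H times, so Cauchy-Schwarz over the windows gives
     H^2 |S|^2 <= (H+N-1) sum_(h,h'<H) rho(h'-h) <= (H+N-1) H (N + 2 sum_(0<a<H) |rho a|),
   where rho a = sum_k u_(k+a) conj(u_k).  For u_k = e(g(k)), rho a is the exponential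
   sum of the difference g(. + a) - g.  Applying this to g = f_v for each vector v
   counted by T_d (such a sum has at most Y+1 <= 2Y terms because H_r <= Y) and using
   Cauchy-Schwarz over v yields T_d^2 <= 4/H_(d+1) + 4 T_(d+1), where T_0 = |S|/Y.
   Since B^2 = 4B + 4, this implies
     (T_d/B)^(2t) <= max(H_(d+1)^(-t), (T_(d+1)/B)^t)   for t = 2^-(d+1),
   and the theorem follows by induction on d. *)

From Stdlib Require Import Reals ZArith List Lia Lra Psatz.
From Coquelicot Require Import Coquelicot.
Open Scope R_scope.

Fixpoint rsum (n : nat) (F : nat -> R) : R :=
  match n with O => 0 | S n' => rsum n' F + F n' end.

Lemma rsum_ext n F G : (forall i, (i < n)%nat -> F i = G i) -> rsum n F = rsum n G.
Proof.
  induction n as [|n IH]; intros hFG; simpl; [reflexivity|].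
  rewrite IH by (intros; apply hFG; lia). rewrite hFG by lia. reflexivity.
Qed.

Lemma rsum_add n F G : rsum n (fun i => F i + G i) = rsum n F + rsum n G.
Proof. induction n as [|n IH]; simpl; [lra|]. rewrite IH; ring. Qed.

Lemma rsum_scal_l n c F : rsum n (fun i => c * F i) = c * rsum n F.
Proof. induction n as [|n IH]; simpl; [ring|]. rewrite IH; ring. Qed.

Lemma rsum_const n c : rsum n (fun _ => c) = INR n * c.
Proof. induction n as [|n IH]; simpl rsum; [simpl; ring|]. rewrite IH, S_INR; ring. Qed.

Lemma rsum_eq0 n F : (forall i, (i < n)%nat -> F i = 0) -> rsum n F = 0.
Proof. intros hF. rewrite (rsum_ext n F (fun _ => 0)) by exact hF. rewrite rsum_const; ring. Qed.

Lemma rsum_le n F G : (forall i, (i < n)%nat -> F i <= G i) -> rsum n F <= rsum n G.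
Proof.
  induction n as [|n IH]; intros hFG; simpl; [lra|].
  apply Rplus_le_compat; [apply IH; intros; apply hFG|apply hFG]; lia.
Qed.

Lemma rsum_ge0 n F : (forall i, (i < n)%nat -> 0 <= F i) -> 0 <= rsum n F.
Proof. intros hF. rewrite <- (rsum_eq0 n (fun _ => 0)) by auto. now apply rsum_le. Qed.

Lemma rsum_split n m F : rsum (n + m) F = rsum n F + rsum m (fun i => F (n + i)%nat).
Proof.
  induction m as [|m IH]; simpl; [rewrite Nat.add_0_r; ring|].
  rewrite Nat.add_succ_r; simpl. rewrite IH; ring.
Qed.

Lemma rsum_recl n F : rsum (S n) F = F O + rsum n (fun i => F (S i)).
Proof. rewrite <- Nat.add_1_l, rsum_split. simpl; ring. Qed.

Lemma rsum_rev n F : rsum n (fun i => F (n - 1 - i)%nat) = rsum n F.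
Proof.
  induction n as [|n IH]; [reflexivity|].
  rewrite rsum_recl. replace (S n - 1 - 0)%nat with n by lia. simpl rsum.
  rewrite <- IH. rewrite (rsum_ext n _ (fun i => F (n - 1 - i)%nat)) by (intros; f_equal; lia).
  ring.
Qed.

Lemma rsum_exchange n m F :
  rsum n (fun i => rsum m (fun j => F i j)) = rsum m (fun j => rsum n (fun i => F i j)).
Proof.
  induction n as [|n IH]; simpl; [symmetry; now apply rsum_eq0|].
  rewrite IH, <- rsum_add. reflexivity.
Qed.

Lemma rsum_le_len n m F : (forall i, 0 <= F i) -> (n <= m)%nat -> rsum n F <= rsum m F.
Proof.
  intros hF hnm. replace m with (n + (m - n))%nat by lia. rewrite rsum_split.
  assert (0 <= rsum (m - n) (fun i => F (n + i)%nat)) by (apply rsum_ge0; auto). lra.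
Qed.

Lemma rsum_ge_term n F i : (forall j, 0 <= F j) -> (i < n)%nat -> F i <= rsum n F.
Proof.
  intros hF hi. apply Rle_trans with (rsum (S i) F); [|apply rsum_le_len; assumption].
  simpl. pose proof (rsum_ge0 i F (fun j _ => hF j)). lra.
Qed.

Lemma rsum_sqr n F : rsum n F ^ 2 = rsum n (fun i => rsum n (fun j => F i * F j)).
Proof.
  replace (rsum n F ^ 2) with (rsum n F * rsum n F) by ring.
  rewrite <- rsum_scal_l. apply rsum_ext; intros i _.
  rewrite Rmult_comm, <- rsum_scal_l. reflexivity.
Qed.

Lemma rsum_shift_support lo n h G :
  (forall j, (j < lo)%nat -> G j = 0) -> (forall j, (lo + n <= j)%nat -> G j = 0) ->
  (h <= lo)%nat ->
  rsum (lo + n) (fun m => G (m + h)%nat) = rsum n (fun i => G (lo + i)%nat).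
Proof.
  intros hlo hhi hh.
  set (M := (lo + n)%nat).
  assert (hshift : rsum M (fun m => G (m + h)%nat) = rsum (h + M) G - rsum h G).
  { rewrite (rsum_split h M G).
    rewrite (rsum_ext M (fun i => G (h + i)%nat) (fun m => G (m + h)%nat))
      by (intros; f_equal; lia).
    ring. }
  assert (htail : rsum (h + M) G = rsum M G).
  { replace (h + M)%nat with (M + h)%nat by lia. rewrite rsum_split.
    rewrite (rsum_eq0 h (fun i => G (M + i)%nat)) by (intros; apply hhi; unfold M; lia). ring. }
  rewrite hshift, htail, (rsum_eq0 h) by (intros; apply hlo; lia).
  unfold M. rewrite rsum_split, rsum_eq0 by (intros; apply hlo; lia). ring.
Qed.

Lemma sqr_add_le (a S Q n : R) : 0 <= n -> 0 <= Q -> S ^ 2 <= n * Q ->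
  (a + S) ^ 2 <= (n + 1) * (a ^ 2 + Q).
Proof.
  intros hn hQ hS.
  destruct (Req_dec n 0) as [->|hn0].
  - assert (S = 0) by nra. subst. nra.
  - assert (n * (2 * a * S) <= n * (n * a ^ 2 + Q))
      by (pose proof (pow2_ge_0 (n * a - S)); nra).
    assert (2 * a * S <= n * a ^ 2 + Q) by (apply Rmult_le_reg_l with n; lra).
    nra.
Qed.

Lemma sumR_cons x l : sumR (x :: l) = x + sumR l.
Proof. reflexivity. Qed.

Lemma sumR_app l1 l2 : sumR (l1 ++ l2) = sumR l1 + sumR l2.
Proof. induction l1 as [|x l1 IH]; cbn [app]; [simpl; ring|]. rewrite !sumR_cons, IH; ring. Qed.

Lemma sumR_flat_map {A B : Type} (F : B -> R) (g : A -> list B) l :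
  sumR (map F (flat_map g l)) = sumR (map (fun v => sumR (map F (g v))) l).
Proof.
  induction l as [|v l IH]; [reflexivity|].
  cbn [flat_map map]. rewrite map_app, sumR_app, sumR_cons, IH. reflexivity.
Qed.

Lemma sumR_le {A : Type} (F G : A -> R) l :
  (forall x, F x <= G x) -> sumR (map F l) <= sumR (map G l).
Proof.
  intros hFG; induction l as [|x l IH]; cbn [map]; [simpl; lra|].
  rewrite !sumR_cons. specialize (hFG x). lra.
Qed.

Lemma sumR_ge0 {A : Type} (F : A -> R) l : (forall x, 0 <= F x) -> 0 <= sumR (map F l).
Proof.
  intros hF; induction l as [|x l IH]; cbn [map]; [simpl; lra|].
  rewrite sumR_cons. specialize (hF x). lra.
Qed.

Lemma sumR_affine {A : Type} (F : A -> R) a b l :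
  sumR (map (fun v => a + b * F v) l) = INR (length l) * a + b * sumR (map F l).
Proof.
  induction l as [|x l IH]; simpl map; [simpl; ring|].
  rewrite !sumR_cons, IH, length_cons, S_INR. ring.
Qed.

Lemma sumR_seq (F : nat -> R) k n : sumR (map F (seq k n)) = rsum n (fun i => F (k + i)%nat).
Proof.
  revert k; induction n as [|n IH]; intros k; [reflexivity|].
  rewrite rsum_recl. cbn [seq map]. rewrite sumR_cons, IH, Nat.add_0_r.
  f_equal. apply rsum_ext; intros; f_equal; lia.
Qed.

Lemma sumR_sqr_le (l : list R) : sumR l ^ 2 <= INR (length l) * sumR (map (fun x => x ^ 2) l).
Proof.
  induction l as [|x l IH]; [simpl; lra|].
  cbn [map]. rewrite !sumR_cons, length_cons, S_INR.
  apply sqr_add_le; auto using pos_INR.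
  apply sumR_ge0; intros; apply pow2_ge_0.
Qed.

Lemma rsum_sqr_le n F : rsum n F ^ 2 <= INR n * rsum n (fun i => F i ^ 2).
Proof.
  pose proof (sumR_sqr_le (map F (seq 0 n))) as hCS.
  rewrite map_map, length_map, length_seq, !sumR_seq in hCS. exact hCS.
Qed.

Lemma rsum_le_rsum_abs n m F : (n <= m)%nat -> rsum n F <= rsum m (fun i => Rabs (F i)).
Proof.
  intros hnm. apply Rle_trans with (rsum n (fun i => Rabs (F i))).
  - apply rsum_le; intros; apply Rle_abs.
  - apply rsum_le_len; [intros; apply Rabs_pos|exact hnm].
Qed.

Lemma rsum_toeplitz_le H (K : nat -> nat -> R) (g : nat -> R) h :
  (forall i j, K i j = K j i) -> (forall i a, (i < H)%nat -> K i (i + a)%nat = g a) ->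
  (h < H)%nat -> rsum H (K h) <= g O + 2 * rsum (H - 1) (fun b => Rabs (g (S b))).
Proof.
  intros hsym hK hh.
  replace H with (S h + (H - S h))%nat at 1 by lia. rewrite rsum_split.
  assert (hleft : rsum (S h) (K h) = g O + rsum h (fun b => g (S b))).
  { rewrite <- rsum_rev, <- rsum_recl. apply rsum_ext; intros i hi.
    rewrite hsym. replace h with (h - i + i)%nat at 2 by lia.
    replace (S h - 1 - i)%nat with (h - i)%nat by lia. apply hK; lia. }
  assert (hright : rsum (H - S h) (fun i => K h (S h + i)%nat)
                   = rsum (H - S h) (fun b => g (S b))).
  { apply rsum_ext; intros i hi. replace (S h + i)%nat with (h + S i)%nat by lia. apply hK; lia. }
  rewrite hleft, hright.
  pose proof (rsum_le_rsum_abs h (H - 1) (fun b => g (S b)) ltac:(lia)).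
  pose proof (rsum_le_rsum_abs (H - S h) (H - 1) (fun b => g (S b)) ltac:(lia)).
  lra.
Qed.

Definition corr (N : nat) (u : nat -> R) (a : nat) : R :=
  rsum (N - a) (fun k => u k * u (k + a)%nat).

Section Windows.

Variables (N H : nat).

(* u_0, ..., u_(N-1) moved to positions H-1, ..., H+N-2, so that each u_k lies in exactly
   H of the windows [m, m+H) with m < H-1+N. *)
Definition pad (u : nat -> R) (j : nat) : R :=
  if andb (H - 1 <=? j)%nat (j <? H - 1 + N)%nat then u (j - (H - 1))%nat else 0.

Definition window (u : nat -> R) (m : nat) : R := rsum H (fun h => pad u (m + h)%nat).

Definition lagcorr (u : nat -> R) (h h' : nat) : R :=
  rsum (H - 1 + N) (fun m => pad u (m + h)%nat * pad u (m + h')%nat).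

Lemma pad_lt u j : (j < H - 1)%nat -> pad u j = 0.
Proof. intros hj. unfold pad. destruct (Nat.leb_spec (H - 1) j); [lia|reflexivity]. Qed.

Lemma pad_ge u j : (H - 1 + N <= j)%nat -> pad u j = 0.
Proof.
  intros hj. unfold pad. destruct (Nat.ltb_spec j (H - 1 + N)); [lia|].
  rewrite Bool.andb_false_r. reflexivity.
Qed.

Lemma pad_in u i : (i < N)%nat -> pad u (H - 1 + i) = u i.
Proof.
  intros hi. unfold pad.
  destruct (Nat.leb_spec (H - 1) (H - 1 + i)); [|lia].
  destruct (Nat.ltb_spec (H - 1 + i) (H - 1 + N)); [|lia].
  cbn [andb]. f_equal; lia.
Qed.

Lemma rsum_window u : rsum (H - 1 + N) (window u) = INR H * rsum N u.
Proof.
  unfold window. rewrite rsum_exchange, <- rsum_const. apply rsum_ext; intros h hh.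
  rewrite rsum_shift_support by (auto using pad_lt, pad_ge; lia).
  apply rsum_ext; intros; apply pad_in; assumption.
Qed.

Lemma rsum_window_sqr u :
  rsum (H - 1 + N) (fun m => window u m ^ 2) = rsum H (fun h => rsum H (lagcorr u h)).
Proof.
  unfold window, lagcorr.
  rewrite (rsum_ext _ _ _ (fun m _ => rsum_sqr H _)), rsum_exchange.
  apply rsum_ext; intros. apply rsum_exchange.
Qed.

Lemma lagcorr_sym u h h' : lagcorr u h h' = lagcorr u h' h.
Proof. unfold lagcorr. apply rsum_ext; intros; ring. Qed.

Lemma lagcorr_shift u h a : (h < H)%nat -> lagcorr u h (h + a) = corr N u a.
Proof.
  intros hh. unfold lagcorr, corr.
  set (G j := pad u j * pad u (j + a)%nat).
  rewrite (rsum_ext _ _ (fun m => G (m + h)%nat))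
    by (intros; unfold G; rewrite Nat.add_assoc; reflexivity).
  rewrite rsum_shift_support; unfold G.
  2: { intros j hj. rewrite pad_lt by exact hj. ring. }
  2: { intros j hj. rewrite pad_ge by exact hj. ring. }
  2: lia.
  replace N with (N - a + (N - (N - a)))%nat at 1 by lia.
  rewrite rsum_split, (rsum_eq0 (N - (N - a))), Rplus_0_r.
  - apply rsum_ext; intros i hi. rewrite <- Nat.add_assoc, !pad_in by lia. reflexivity.
  - intros i hi. rewrite (pad_ge u (H - 1 + _ + a)) by lia. ring.
Qed.

Lemma sqr_rsum_le_lagcorr u :
  (INR H * rsum N u) ^ 2 <= INR (H - 1 + N) * rsum H (fun h => rsum H (lagcorr u h)).
Proof. rewrite <- rsum_window, <- rsum_window_sqr. apply rsum_sqr_le. Qed.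

End Windows.

(* For u_k = c_k + i s_k, [corr N c a + corr N s a] is the real part of
   sum_k u_(k+a) conj(u_k). *)
Lemma vdc_pair N H (c s : nat -> R) :
  INR H ^ 2 * (rsum N c ^ 2 + rsum N s ^ 2)
  <= INR (H - 1 + N) * INR H *
     (corr N c O + corr N s O
      + 2 * rsum (H - 1) (fun b => Rabs (corr N c (S b) + corr N s (S b)))).
Proof.
  set (bound := corr N c O + corr N s O
                + 2 * rsum (H - 1) (fun b => Rabs (corr N c (S b) + corr N s (S b)))).
  set (K i j := lagcorr N H c i j + lagcorr N H s i j).
  assert (hrows : rsum H (fun h => rsum H (K h)) <= INR H * bound).
  { rewrite <- rsum_const. apply rsum_le; intros h hh.
    apply (rsum_toeplitz_le H K (fun a => corr N c a + corr N s a)); unfold K.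
    - intros; rewrite (lagcorr_sym N H c), (lagcorr_sym N H s); reflexivity.
    - intros; rewrite !lagcorr_shift by assumption; reflexivity.
    - exact hh. }
  assert (hsplit : rsum H (fun h => rsum H (K h))
                   = rsum H (fun h => rsum H (lagcorr N H c h))
                     + rsum H (fun h => rsum H (lagcorr N H s h))).
  { rewrite <- rsum_add. apply rsum_ext; intros. apply rsum_add. }
  pose proof (sqr_rsum_le_lagcorr N H c). pose proof (sqr_rsum_le_lagcorr N H s).
  assert (0 <= INR (H - 1 + N)) by apply pos_INR.
  nra.
Qed.

(* The number of integers in (A, B]: [sum_int_in A B g] sums g (up A + k) for k < count A B. *)
Definition count (A B : R) : nat := Z.to_nat (up B - 1 - up A + 1).

Lemma up_sub_INR x a : up (x - INR a) = (up x - Z.of_nat a)%Z.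
Proof.
  destruct (archimed x) as [hlo hhi]. symmetry. apply tech_up;
    rewrite minus_IZR, <- INR_IZR_INZ; lra.
Qed.

Lemma count_sub_INR A B a : count A (B - INR a) = (count A B - a)%nat.
Proof. unfold count. rewrite up_sub_INR. lia. Qed.

Lemma INR_count_le A B c : B - A <= c -> 0 <= c + 1 -> INR (count A B) <= c + 1.
Proof.
  intros hc hc1. unfold count.
  destruct (Z_lt_le_dec (up B - 1 - up A + 1) 0) as [hneg|hpos].
  - replace (Z.to_nat _) with O by lia. simpl. exact hc1.
  - rewrite INR_IZR_INZ, Z2Nat.id, plus_IZR, !minus_IZR by exact hpos.
    destruct (archimed A), (archimed B). simpl. lra.
Qed.

Lemma Re_sumC (l : list C) : Re (fold_right Cplus 0%C l) = sumR (map Re l).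
Proof.
  induction l as [|z l IH]; [reflexivity|].
  cbn [fold_right map]. rewrite sumR_cons, <- IH. reflexivity.
Qed.

Lemma Im_sumC (l : list C) : Im (fold_right Cplus 0%C l) = sumR (map Im l).
Proof.
  induction l as [|z l IH]; [reflexivity|].
  cbn [fold_right map]. rewrite sumR_cons, <- IH. reflexivity.
Qed.

Definition phase (g : R -> R) (L : Z) (k : nat) : R := 2 * PI * g (IZR (L + Z.of_nat k)).

Lemma Cmod_sum_int_in_sqr g A B :
  Cmod (sum_int_in A B (fun n => e (g (IZR n)))) ^ 2
  = rsum (count A B) (fun k => cos (phase g (up A) k)) ^ 2
    + rsum (count A B) (fun k => sin (phase g (up A) k)) ^ 2.
Proof.
  rewrite Cmod2_alt. unfold sum_int_in, sumZ.
  rewrite Re_sumC, Im_sumC, !map_map, !sumR_seq. reflexivity.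
Qed.

Lemma Re_sum_int_in_diff g A B a :
  Re (sum_int_in A (B - INR a) (fun n => e (g (IZR n + INR a) - g (IZR n))))
  = corr (count A B) (fun k => cos (phase g (up A) k)) a
    + corr (count A B) (fun k => sin (phase g (up A) k)) a.
Proof.
  unfold sum_int_in, sumZ. fold (count A (B - INR a)). rewrite count_sub_INR.
  rewrite Re_sumC, map_map, sumR_seq. unfold corr. rewrite <- rsum_add.
  apply rsum_ext; intros k _. rewrite Nat.add_0_l. unfold e, phase, Re; cbn [fst].
  replace (IZR (up A + Z.of_nat k) + INR a) with (IZR (up A + Z.of_nat (k + a)))
    by (rewrite INR_IZR_INZ, Nat2Z.inj_add, !plus_IZR; ring).
  rewrite Rmult_minus_distr_l, cos_minus. ring.
Qed.

Lemma vdc_exp_sum (g : R -> R) A Y' Y Hn :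
  (1 <= Hn)%nat -> INR Hn <= Y -> Y' <= Y ->
  Cmod (sum_int_in A (A + Y') (fun n => e (g (IZR n)))) ^ 2
  <= 2 * Y / INR Hn *
     (2 * Y + 2 * sumR (map (fun a => Cmod (sum_int_in A (A + Y' - INR a)
                                 (fun n => e (g (IZR n + INR a) - g (IZR n)))))
                           (seq 1 (Hn - 1)))).
Proof.
  intros hHn hHY hY'.
  set (N := count A (A + Y')).
  set (c k := cos (phase g (up A) k)). set (s k := sin (phase g (up A) k)).
  set (Sa a := Cmod (sum_int_in A (A + Y' - INR a)
                       (fun n => e (g (IZR n + INR a) - g (IZR n))))).
  set (Phi := rsum (Hn - 1) (fun b => Rabs (corr N c (S b) + corr N s (S b)))).
  assert (h1 : 1 <= INR Hn) by (apply (le_INR 1); exact hHn).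
  assert (hcorr0 : corr N c O + corr N s O = INR N).
  { unfold corr. rewrite <- rsum_add, Nat.sub_0_r, <- (Rmult_1_r (INR N)), <- rsum_const.
    apply rsum_ext; intros k _. rewrite Nat.add_0_r. unfold c, s.
    rewrite <- (sin2_cos2 (phase g (up A) k)). unfold Rsqr. ring. }
  assert (hPhi : Phi <= sumR (map Sa (seq 1 (Hn - 1)))).
  { rewrite sumR_seq. apply rsum_le; intros b _.
    pose proof (re_le_Cmod (sum_int_in A (A + Y' - INR (S b))
                              (fun n => e (g (IZR n + INR (S b)) - g (IZR n))))) as hre.
    rewrite Re_sum_int_in_diff in hre. exact hre. }
  assert (hPhi0 : 0 <= Phi) by (apply rsum_ge0; intros; apply Rabs_pos).
  assert (hN : INR N <= Y + 1) by (apply (INR_count_le A (A + Y') Y); lra).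
  assert (hM : INR (Hn - 1 + N) <= 2 * Y)
    by (rewrite plus_INR, minus_INR by exact hHn; simpl; lra).
  pose proof (pos_INR (Hn - 1 + N)). pose proof (pos_INR N).
  pose proof (vdc_pair N Hn c s) as hvdc. fold Phi in hvdc. rewrite hcorr0 in hvdc.
  rewrite Cmod_sum_int_in_sqr. fold N c s Sa.
  set (K := rsum N c ^ 2 + rsum N s ^ 2) in *.
  set (Sigma := sumR (map Sa (seq 1 (Hn - 1)))) in *.
  assert (hK : INR Hn * K <= INR (Hn - 1 + N) * (INR N + 2 * Phi))
    by (apply Rmult_le_reg_l with (INR Hn); [lra|]; nra).
  assert (INR (Hn - 1 + N) * (INR N + 2 * Phi) <= 2 * Y * (2 * Y + 2 * Sigma))
    by (apply Rmult_le_compat; lra).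
  apply Rmult_le_reg_l with (INR Hn); [lra|].
  replace (INR Hn * (2 * Y / INR Hn * (2 * Y + 2 * Sigma))) with (2 * Y * (2 * Y + 2 * Sigma))
    by (field; lra).
  lra.
Qed.

Definition diff_sum_norm (f : R -> R) (X Y : R) (v : list nat) : R :=
  Cmod (sum_int_in X (X + Y - sumR (map INR v)) (fun n => e (fdiff f (map INR v) (IZR n)))).

Definition Hprod (H : nat -> nat) (d : nat) : R := prodR (map (fun r => INR (H r)) (seq 0 d)).

Lemma Td_eq f X Y d H :
  Td f X Y d H = / (Y * Hprod H d) * sumR (map (diff_sum_norm f X Y) (allvecs H d)).
Proof. reflexivity. Qed.

Lemma fdiff_snoc f l a : fdiff f (l ++ a :: nil) = fun x => fdiff f l (x + a) - fdiff f l x.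
Proof. unfold fdiff. rewrite fold_left_app. reflexivity. Qed.

Lemma diff_sum_norm_sqr_le f X Y h v : (1 <= h)%nat -> INR h <= Y ->
  diff_sum_norm f X Y v ^ 2
  <= 4 * Y ^ 2 / INR h
     + 4 * Y / INR h * sumR (map (fun a => diff_sum_norm f X Y (v ++ a :: nil)) (seq 1 (h - 1))).
Proof.
  intros h1 hhY.
  assert (hv : 0 <= sumR (map INR v)) by (apply sumR_ge0; apply pos_INR).
  assert (hsnoc : forall a, diff_sum_norm f X Y (v ++ a :: nil)
    = Cmod (sum_int_in X (X + (Y - sumR (map INR v)) - INR a)
         (fun n => e (fdiff f (map INR v) (IZR n + INR a) - fdiff f (map INR v) (IZR n))))).
  { intros a. unfold diff_sum_norm. rewrite map_app. cbn [map].
    rewrite fdiff_snoc, sumR_app, sumR_cons. do 2 f_equal. simpl; ring. }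
  rewrite (map_ext _ _ hsnoc). unfold diff_sum_norm at 1.
  replace (X + Y - sumR (map INR v)) with (X + (Y - sumR (map INR v))) by ring.
  eapply Rle_trans; [apply (vdc_exp_sum _ X _ Y h); [exact h1|exact hhY|lra]|].
  right. field. pose proof (le_INR 1 h h1). simpl in *. lra.
Qed.

Lemma sumR_allvecs_S (F : list nat -> R) H d :
  sumR (map F (allvecs H (S d)))
  = sumR (map (fun v => sumR (map (fun a => F (v ++ a :: nil)) (seq 1 (H d - 1)))) (allvecs H d)).
Proof.
  cbn [allvecs]. rewrite sumR_flat_map. f_equal.
  apply map_ext; intros. rewrite map_map. reflexivity.
Qed.

Lemma sqr_mean_le {A : Type} (l : list A) (x y : A -> R) (alpha beta P : R) :
  0 <= alpha -> 0 <= beta -> (forall v, 0 <= y v) -> 0 < P -> INR (length l) <= P ->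
  (forall v, x v ^ 2 <= alpha + beta * y v) ->
  (sumR (map x l) / P) ^ 2 <= alpha + beta / P * sumR (map y l).
Proof.
  intros halpha hbeta hy hP hlen hx.
  set (n := INR (length l)) in *. assert (hn : 0 <= n) by apply pos_INR.
  assert (hD : 0 <= sumR (map y l)) by (apply sumR_ge0; exact hy).
  assert (hCS : sumR (map x l) ^ 2 <= n * (n * alpha + beta * sumR (map y l))).
  { pose proof (sumR_sqr_le (map x l)) as hCS. rewrite length_map, map_map in hCS.
    eapply Rle_trans; [exact hCS|]. apply Rmult_le_compat_l; [exact hn|].
    unfold n. rewrite <- sumR_affine. apply sumR_le. exact hx. }
  assert (hPn : n * (n * alpha + beta * sumR (map y l)) <= P * (P * alpha + beta * sumR (map y l))).
  { apply Rmult_le_compat; try nra. }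
  replace ((sumR (map x l) / P) ^ 2) with (sumR (map x l) ^ 2 / P ^ 2) by (field; lra).
  apply Rmult_le_reg_r with (P ^ 2); [nra|].
  replace (sumR (map x l) ^ 2 / P ^ 2 * P ^ 2) with (sumR (map x l) ^ 2) by (field; lra).
  replace ((alpha + beta / P * sumR (map y l)) * P ^ 2)
    with (P * (P * alpha + beta * sumR (map y l))) by (field; lra).
  lra.
Qed.

Lemma Hprod_S H d : Hprod H (S d) = Hprod H d * INR (H d).
Proof.
  unfold Hprod. rewrite seq_S, map_app. simpl map.
  induction (map (fun r => INR (H r)) (seq 0 d)) as [|x l IH]; simpl; [ring|].
  unfold prodR in *. simpl. rewrite IH. ring.
Qed.

Lemma Hprod_pos H d : (forall r, (r < d)%nat -> (1 <= H r)%nat) -> 0 < Hprod H d.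
Proof.
  induction d as [|d IH]; intros hH; [unfold Hprod, prodR; simpl; lra|].
  rewrite Hprod_S. apply Rmult_lt_0_compat; [apply IH; intros; apply hH; lia|].
  apply lt_0_INR, hH; lia.
Qed.

Lemma length_allvecs_S H d : length (allvecs H (S d)) = (length (allvecs H d) * (H d - 1))%nat.
Proof.
  cbn [allvecs]. induction (allvecs H d) as [|v V IH]; [reflexivity|].
  cbn [flat_map length]. rewrite length_app, length_map, length_seq, IH. lia.
Qed.

Lemma length_allvecs_le H d : (forall r, (r < d)%nat -> (1 <= H r)%nat) ->
  INR (length (allvecs H d)) <= Hprod H d.
Proof.
  induction d as [|d IH]; intros hH; [unfold Hprod, prodR; simpl; lra|].
  rewrite length_allvecs_S, Hprod_S, mult_INR.
  apply Rmult_le_compat; [apply pos_INR|apply pos_INR| |].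
  - apply IH; intros; apply hH; lia.
  - apply le_INR; lia.
Qed.

Lemma Td_ge0 f X Y d H : 0 < Y -> (forall r, (r < d)%nat -> (1 <= H r)%nat) -> 0 <= Td f X Y d H.
Proof.
  intros hY hH. rewrite Td_eq. pose proof (Hprod_pos H d hH).
  apply Rmult_le_pos; [left; apply Rinv_0_lt_compat; nra|].
  apply sumR_ge0; intros; apply Cmod_ge_0.
Qed.

Lemma Td_sqr_le f X Y d H : (forall r, (r <= d)%nat -> (1 <= H r)%nat) -> INR (H d) <= Y ->
  Td f X Y d H ^ 2 <= 4 / INR (H d) + 4 * Td f X Y (S d) H.
Proof.
  intros hH hHY.
  assert (hH' : forall r, (r < d)%nat -> (1 <= H r)%nat) by (intros; apply hH; lia).
  assert (h1 : 1 <= INR (H d)) by (apply (le_INR 1), hH; lia).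
  pose proof (Hprod_pos H d hH') as hP.
  rewrite !Td_eq, Hprod_S, sumR_allvecs_S.
  set (x := diff_sum_norm f X Y).
  set (y v := sumR (map (fun a => x (v ++ a :: nil)) (seq 1 (H d - 1)))).
  set (h := INR (H d)) in *. set (P := Hprod H d) in *.
  assert (hmean : (sumR (map x (allvecs H d)) / P) ^ 2
                  <= 4 * Y ^ 2 / h + 4 * Y / h / P * sumR (map y (allvecs H d))).
  { apply sqr_mean_le.
    - apply Rmult_le_pos; [nra|left; apply Rinv_0_lt_compat; lra].
    - apply Rmult_le_pos; [lra|left; apply Rinv_0_lt_compat; lra].
    - intros v. apply sumR_ge0; intros; apply Cmod_ge_0.
    - exact hP.
    - apply length_allvecs_le; exact hH'.
    - intros v. apply diff_sum_norm_sqr_le; [apply hH; lia|exact hHY]. }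
  replace ((/ (Y * P) * sumR (map x (allvecs H d))) ^ 2)
    with ((sumR (map x (allvecs H d)) / P) ^ 2 / Y ^ 2) by (field; lra).
  apply Rmult_le_reg_r with (Y ^ 2); [nra|].
  replace ((sumR (map x (allvecs H d)) / P) ^ 2 / Y ^ 2 * Y ^ 2)
    with ((sumR (map x (allvecs H d)) / P) ^ 2) by (field; lra).
  eapply Rle_trans; [exact hmean|]. right. field. lra.
Qed.

Lemma Bconst_pos : 0 < Bconst.
Proof. unfold Bconst. pose proof (sqrt_pos 2). lra. Qed.

Lemma Bconst_sqr : Bconst ^ 2 = 4 * Bconst + 4.
Proof. unfold Bconst. pose proof (sqrt_sqrt 2 ltac:(lra)). nra. Qed.

Lemma sqr_le_Bconst_max h T T' : 0 < h -> 0 <= T' -> T ^ 2 <= 4 / h + 4 * T' ->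
  T ^ 2 <= Bconst ^ 2 * Rmax (/ h) (T' / Bconst).
Proof.
  intros hh hT' hT. pose proof Bconst_pos as hB. pose proof Bconst_sqr as hB2.
  apply Rmax_case_strong; intros hmax.
  - assert (T' <= Bconst / h).
    { apply Rmult_le_reg_r with (/ Bconst); [apply Rinv_0_lt_compat; lra|].
      replace (Bconst / h * / Bconst) with (/ h) by (field; lra). exact hmax. }
    replace (Bconst ^ 2 * / h) with (4 / h + 4 * (Bconst / h)) by (rewrite hB2; field; lra).
    lra.
  - replace (Bconst ^ 2 * (T' / Bconst)) with (4 * (T' / Bconst) + 4 * T')
      by (rewrite hB2; field; lra).
    unfold Rdiv in *. lra.
Qed.

Lemma exp_le x y : x <= y -> exp x <= exp y.
Proof. intros [hlt | ->]; [left; apply exp_increasing; exact hlt|right; reflexivity]. Qed.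

Lemma ln_le_of_sqr_le x y : 0 < x -> x ^ 2 <= y -> 2 * ln x <= ln y.
Proof.
  intros hx hxy. replace (2 * ln x) with (INR 2 * ln x) by (simpl; ring).
  rewrite <- ln_pow by exact hx. apply ln_le; [apply pow_lt|]; assumption.
Qed.

Lemma Rpower_Bconst_step h T T' t : 0 < h -> 0 <= T -> 0 <= T' -> 0 < t ->
  T ^ 2 <= 4 / h + 4 * T' ->
  Rpower Bconst (- (2 * t)) * rpow T (2 * t)
  <= Rmax (Rpower h (- t)) (Rpower Bconst (- t) * rpow T' t).
Proof.
  intros hh hT hT' ht hsqr. pose proof Bconst_pos as hB.
  unfold rpow. destruct (Req_EM_T T 0) as [->|hT0].
  { rewrite Rmult_0_r. eapply Rle_trans; [|apply Rmax_l]. left; apply exp_pos. }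
  pose proof (sqr_le_Bconst_max h T T' hh hT' hsqr) as hmax.
  unfold Rpower. rewrite <- exp_plus.
  destruct (Rle_dec (T' / Bconst) (/ h)) as [hcase|hcase].
  - rewrite Rmax_left in hmax by exact hcase.
    apply ln_le_of_sqr_le in hmax; [|lra].
    rewrite ln_mult, ln_pow, ln_Rinv in hmax
      by (try apply pow_lt; try apply Rinv_0_lt_compat; lra).
    eapply Rle_trans; [|apply Rmax_l]. apply exp_le. simpl in hmax. nra.
  - rewrite Rmax_right in hmax by lra.
    replace (Bconst ^ 2 * (T' / Bconst)) with (Bconst * T') in hmax by (field; lra).
    assert (hT'0 : 0 < T') by (pose proof (pow2_gt_0 T hT0); nra).
    destruct (Req_EM_T T' 0) as [|_]; [lra|].
    apply ln_le_of_sqr_le in hmax; [|lra]. rewrite ln_mult in hmax by lra.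
    eapply Rle_trans; [|apply Rmax_r]. rewrite <- exp_plus. apply exp_le. nra.
Qed.

Lemma rpow_1 x : 0 <= x -> rpow x 1 = x.
Proof.
  intros hx. unfold rpow. destruct (Req_EM_T x 0) as [->|hx0]; [reflexivity|].
  apply Rpower_1; lra.
Qed.

Lemma Td_0 f X Y H : 0 < Y ->
  Td f X Y 0 H = Cmod (Cmult (RtoC (/ Y)) (sum_int_in X (X + Y) (fun n => e (f (IZR n))))).
Proof.
  intros hY. rewrite Td_eq. unfold Hprod, prodR, diff_sum_norm. cbn.
  rewrite Rminus_0_r, Rmult_1_r, Rplus_0_r, Cmod_mult, Cmod_R, Rabs_right; [reflexivity|].
  left; apply Rinv_0_lt_compat; exact hY.
Qed.

Lemma fold_right_Rmax_le b b' l : b <= b' -> fold_right Rmax b l <= fold_right Rmax b' l.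
Proof. intros hb; induction l as [|x l IH]; simpl; [exact hb|]. apply Rle_max_compat_l, IH. Qed.

Lemma vdc_iterated f X Y H d : 0 < Y ->
  (forall r, (r < d)%nat -> (1 <= H r)%nat /\ INR (H r) <= Y) ->
  Cmod (Cmult (RtoC (/ Y)) (sum_int_in X (X + Y) (fun n => e (f (IZR n)))))
  <= Bconst * fold_right Rmax (Rpower Bconst (- / 2 ^ d) * rpow (Td f X Y d H) (/ 2 ^ d))
       (map (fun r => Rpower (INR (H r)) (- / 2 ^ (S r))) (seq 0 d)).
Proof.
  intros hY. pose proof Bconst_pos as hB.
  induction d as [|d IH]; intros hH.
  - cbn [seq map fold_right]. rewrite pow_O, Rinv_1, Rpower_Ropp, Rpower_1 by exact hB.
    rewrite rpow_1 by (apply Td_ge0; [exact hY|intros; lia]).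
    rewrite Td_0 by exact hY. right; field. lra.
  - assert (hH' : forall r, (r < d)%nat -> (1 <= H r)%nat) by (intros; apply hH; lia).
    destruct (hH d ltac:(lia)) as [hHd hHdY].
    eapply Rle_trans; [apply IH; intros; apply hH; lia|].
    rewrite seq_S, map_app, fold_right_app. cbn [map fold_right]. rewrite Nat.add_0_l.
    apply Rmult_le_compat_l; [lra|]. apply fold_right_Rmax_le.
    replace (/ 2 ^ d) with (2 * / 2 ^ S d) by (simpl; field; apply pow_nonzero; lra).
    apply Rpower_Bconst_step.
    + apply lt_0_INR; lia.
    + apply Td_ge0; assumption.
    + apply Td_ge0; [assumption|intros; apply hH; lia].
    + apply Rinv_0_lt_compat, pow_lt; lra.
    + apply Td_sqr_le; [intros; apply hH; lia|exact hHdY].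
Qed.

Theorem theorem7 (X Y : R) (f : R -> R) (d : nat) (H : nat -> nat)
  (hY : 0 < Y)
  (hH : forall r, (r < d)%nat -> (1 <= H r)%nat)
  (hsum : sumR (map (fun r => INR (H r)) (seq 0 d)) <= Y) :
  Cmod (Cmult (RtoC (/ Y)) (sum_int_in X (X + Y) (fun n => e (f (IZR n)))))
  <= Bconst *
     fold_right Rmax
       (Rpower Bconst (- / 2 ^ d) * rpow (Td f X Y d H) (/ 2 ^ d))
       (map (fun r => Rpower (INR (H r)) (- / 2 ^ (S r))) (seq 0 d)).
Proof.
  apply vdc_iterated; [exact hY|]. intros r hr. split; [exact (hH r hr)|].
  eapply Rle_trans; [|exact hsum]. rewrite sumR_seq.
  apply (rsum_ge_term d (fun r => INR (H r))); [intros; apply pos_INR|exact hr].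
Qed.
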